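(* Let $k\in\mathbb{N}$ and let $H=\sum_P\alpha_PP$ be an $n$-qubit Hamiltonian with $\|H\|_\infty\le1$ and $\mathrm{tr}(H)=0$, and let $A=\Pi_D(I^{\otimes n}\otimes H)\Pi_D$ and $H_{>k}=\sum_{|P|>k}\alpha_PP$. Then for every integer $\ell\ge2$, \[ |\langle\sigma_{I^{\otimes n}}|A^\ell|\sigma_{I^{\otimes n}}\rangle| \le \langle\sigma_{I^{\otimes n}}|A^2|\sigma_{I^{\otimes n}}\rangle = \|H_{>k}\|_2^2. \]
   Context: The $n$-qubit Paulis are $\{I,X,Y,Z\}^{\otimes n}$ with weight $|P|$ the number of non-identity factors; every Hamiltonian is uniquely $H=\sum_P\alpha_PP$ with real $\alpha_P$. $|\sigma_{I^{\otimes n}}\rangle=2^{-n/2}\sum_{x}|x\rangle\otimes|x\rangle$ and $|\sigma_P\rangle=(I^{\otimes n}\otimes P)|\sigma_{I^{\otimes n}}\rangle$. $D$ is the span of $|\sigma_P\rangle$ for $P=I^{\otimes n}$ or $|P|>k$; $\Pi_D$ is its projector. $\|M\|_2=\sqrt{\mathrm{tr}(M^\dagger M)/2^n}$ is the normalized Frobenius norm and $\|\cdot\|_\infty$ the spectral norm. *)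

(* n-qubit operators are 2^n x 2^n matrices over a
   numClosedFieldType C (e.g. algC, or complex numbers R[i]). *)
From HB Require Import structures.
From mathcomp Require Import all_boot all_order all_algebra.
From mathcomp.real_closed Require Export mxtens.
Set Implicit Arguments. Unset Strict Implicit. Unset Printing Implicit Defensive.
Import Order.TTheory GRing.Theory Num.Theory.
Local Open Scope ring_scope.

Section Qubits.
Variable C : numClosedFieldType.

Definition adj {m p : nat} (M : 'M[C]_(m, p)) : 'M[C]_(p, m) :=
  (map_mx Num.conj M)^T.

(* single-qubit Paulis: 0 = I, 1 = X, 2 = Y, 3 = Z; entry (row b, column c) *)
Definition pauli1 (a : 'I_4) (b c : bool) : C :=
  match val a with
  | 0 => (b == c)%:R
  | 1 => (b != c)%:R
  | 2 => if b == c then 0 else if b then 'i else - 'i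
  | _ => if b == c then (if b then -1 else 1) else 0
  end.

Definition bit {N : nat} (x : 'I_N) (q : nat) : bool := odd (x %/ 2 ^ q).

Definition pstring (n : nat) := {ffun 'I_n -> 'I_4}.

Definition pauli {n : nat} (P : pstring n) : 'M[C]_(2 ^ n) :=
  \matrix_(x, y) \prod_(q < n) pauli1 (P q) (bit x q) (bit y q).

Definition weight {n : nat} (P : pstring n) : nat := #|[set q | P q != 0]|.

Definition pid (n : nat) : pstring n := [ffun => 0].

Definition sigmaI (n : nat) : 'cV[C]_(2 ^ n * 2 ^ n) :=
  (sqrtC (2 ^ n)%:R)^-1 *:
    \sum_(x < 2 ^ n) (delta_mx x (0 : 'I_1) *t delta_mx x (0 : 'I_1)).

Definition sigmaP {n : nat} (P : pstring n) : 'cV[C]_(2 ^ n * 2 ^ n) :=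
  (1%:M *t pauli P) *m sigmaI n.

Definition inD (n k : nat) (P : pstring n) : bool :=
  (P == pid n) || (k < weight P)%N.

(* Pi is the (orthogonal) projector onto D = span{ |sigma_P> : inD P }:
   Hermitian, idempotent, with column space equal to D *)
Definition Dspan (n k : nat) : 'M[C]_(2 ^ n * 2 ^ n) :=
  (\sum_(P : pstring n | inD k P) <<trmx (sigmaP P)>>)%MS.

Definition is_proj_D (n k : nat) (Pi : 'M[C]_(2 ^ n * 2 ^ n)) : Prop :=
  [/\ adj Pi = Pi, Pi *m Pi = Pi &
      (trmx Pi == Dspan n k)%MS].

(* matrix powers (square matrices of non-successor dimension) *)
Fixpoint mxpow {m : nat} (A : 'M[C]_m) (l : nat) : 'M[C]_m :=
  if l is l'.+1 then A *m mxpow A l' else 1%:M.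

Definition vnorm2 {m : nat} (v : 'cV[C]_m) : C := (adj v *m v) 0 0.

Definition specnorm_le1 {m : nat} (M : 'M[C]_m) : Prop :=
  forall v : 'cV[C]_m, vnorm2 (M *m v) <= vnorm2 v.

Definition norm2 {n : nat} (M : 'M[C]_(2 ^ n)) : C :=
  sqrtC (\tr (adj M *m M) / (2 ^ n)%:R).

Definition expI {n : nat} (M : 'M[C]_(2 ^ n * 2 ^ n)) : C :=
  (adj (sigmaI n) *m M *m sigmaI n) 0 0.

Definition Hgt {n : nat} (k : nat) (alpha : pstring n -> C) : 'M[C]_(2 ^ n) :=
  \sum_(P : pstring n | (k < weight P)%N) alpha P *: pauli P.

End Qubits.

(* A = Pi (I (x) H) Pi is a Hermitian contraction, since Pi is an orthogonal
   projector and I (x) H inherits Hermiticity and ||H||_oo <= 1 from H.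
   The Paulis are orthogonal for the trace inner product, so Pi fixes
   |sigma_P> for P in D and kills it otherwise; as alpha_I = 0 (tr H = 0),
   A|sigma_I> = Pi|sigma_H> = |sigma_{H_{>k}}> =: v.  Hence
   <sigma_I|A^(l+2)|sigma_I> = <v|A^l|v>, whose modulus is at most
   ||v||^2 = <sigma_I|A^2|sigma_I> by Cauchy-Schwarz, and
   ||v||^2 = tr(H_{>k}^dag H_{>k}) / 2^n = ||H_{>k}||_2^2. *)

From HB Require Import structures.
From mathcomp Require Import all_boot all_order all_algebra.
From mathcomp.real_closed Require Import mxtens.
From mathcomp Require Import ring.
Import Order.TTheory GRing.Theory Num.Theory.
Local Open Scope ring_scope.

Lemma sum_nat_even_odd (R : nmodType) (m : nat) (h : nat -> R) :
  \sum_(0 <= x < m.*2) h x = \sum_(0 <= x < m) (h x.*2 + h x.*2.+1).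
Proof.
elim: m => [|m IH]; first by rewrite !big_geq.
by rewrite doubleS !big_nat_recr //= IH addrA.
Qed.

Lemma divn_double_add_exp (x b q : nat) : (b < 2)%N ->
  ((x.*2 + b) %/ 2 ^ q.+1 = x %/ 2 ^ q)%N.
Proof.
by move=> b_lt2; rewrite expnS divnMA -muln2 divnMDl // (divn_small b_lt2) addn0.
Qed.

Lemma sum_prod_bits (R : comPzSemiRingType) (n : nat) (F : 'I_n -> bool -> R) :
  \sum_(x < 2 ^ n) \prod_(q < n) F q (bit x q) =
  \prod_(q < n) (F q false + F q true).
Proof.
elim: n F => [|n IH] F; first by rewrite expn0 big_ord1 !big_ord0.
rewrite big_ord_recl -(IH (fun q => F (lift ord0 q))) /bit.
rewrite -(big_mkord xpredT (fun x => \prod_(q < n.+1) F q (odd (x %/ 2 ^ q)))).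
rewrite -(big_mkord xpredT (fun x => \prod_(q < n) F (lift ord0 q) (odd (x %/ 2 ^ q)))).
rewrite expnSr muln2 sum_nat_even_odd big_distrr /=; apply: eq_bigr => x _.
rewrite !big_ord_recl /= !expn0 !divn1 /= !odd_double /= mulrDl.
congr (_ * _ + _ * _); apply: eq_bigr => q _; rewrite /bump /= add1n.
  by rewrite -[x.*2]addn0 divn_double_add_exp.
by rewrite -[x.*2.+1]addn1 divn_double_add_exp.
Qed.

Lemma eq_from_bits (n x y : nat) : (x < 2 ^ n)%N -> (y < 2 ^ n)%N ->
  (forall q, (q < n)%N -> odd (x %/ 2 ^ q) = odd (y %/ 2 ^ q)) -> x = y.
Proof.
elim: n x y => [|n IH] x y; first by rewrite expn0 !ltnS !leqn0 => /eqP-> /eqP->.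
move=> x_lt y_lt eq_bits.
have half_eq : (x %/ 2 = y %/ 2)%N.
  apply: IH; rewrite ?ltn_divLR -?expnSr // => q q_lt.
  by rewrite -!divnMA -expnS; apply: eq_bits.
have := eq_bits 0%N isT; rewrite expn0 !divn1 => odd_eq.
by rewrite (divn_eq x 2) (divn_eq y 2) half_eq !modn2 odd_eq.
Qed.

Section Adjoint.
Context {C : numClosedFieldType}.

Lemma adjE m p (M : 'M[C]_(m, p)) i j : adj M i j = (M j i)^*.
Proof. by rewrite !mxE. Qed.

Lemma adjmxM m p r (A : 'M[C]_(m, p)) (B : 'M[C]_(p, r)) :
  adj (A *m B) = adj B *m adj A.
Proof. by rewrite /adj map_mxM trmx_mul. Qed.

Lemma adjmx1 m : adj (1%:M : 'M[C]_m) = 1%:M.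
Proof. by rewrite /adj map_mx1 trmx1. Qed.

Lemma adjmxZ m p a (A : 'M[C]_(m, p)) : adj (a *: A) = a^* *: adj A.
Proof. by rewrite /adj map_mxZ linearZ. Qed.

Lemma adj_tens m p r s (A : 'M[C]_(m, p)) (B : 'M[C]_(r, s)) :
  adj (A *t B) = adj A *t adj B.
Proof. by rewrite /adj map_mxT trmx_tens. Qed.

Lemma adj_mulmx_dotmx m (u v : 'cV[C]_m) : (adj u *m v) 0 0 = dotmx v^T u^T.
Proof. by rewrite dotmxE !mxE; apply: eq_bigr => i _; rewrite !mxE mulrC. Qed.

Lemma vnorm2_ge0 m (v : 'cV[C]_m) : 0 <= vnorm2 v.
Proof. by rewrite /vnorm2 adj_mulmx_dotmx dnorm_ge0. Qed.

Lemma vnorm2D_orth m (u v : 'cV[C]_m) : (adj v *m u) 0 0 = 0 ->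
  vnorm2 (u + v) = vnorm2 u + vnorm2 v.
Proof. by rewrite /vnorm2 !adj_mulmx_dotmx linearD => /hnormDd. Qed.

Lemma cauchy_schwarz_cV m (u v : 'cV[C]_m) :
  `|(adj u *m v) 0 0| ^+ 2 <= vnorm2 u * vnorm2 v.
Proof. by rewrite /vnorm2 !adj_mulmx_dotmx mulrC; apply: CauchySchwarz. Qed.

End Adjoint.

Section Contraction.
Context {C : numClosedFieldType}.

Lemma specnorm_le1_mul m (A B : 'M[C]_m) :
  specnorm_le1 A -> specnorm_le1 B -> specnorm_le1 (A *m B).
Proof. by move=> A_le1 B_le1 v; rewrite -mulmxA (le_trans (A_le1 _)). Qed.

Lemma mxpowSr m (A : 'M[C]_m) l : mxpow A l.+1 = mxpow A l *m A.
Proof.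
elim: l => [|l IH]; first by rewrite /= mulmx1 mul1mx.
by rewrite -[LHS]/(A *m mxpow A l.+1) [in LHS]IH mulmxA.
Qed.

Lemma specnorm_le1_mxpow m (A : 'M[C]_m) l :
  specnorm_le1 A -> specnorm_le1 (mxpow A l).
Proof.
move=> A_le1; elim: l => [|l IH] /=; first by move=> v; rewrite mul1mx.
exact: specnorm_le1_mul.
Qed.

Lemma specnorm_le1_proj m (Pi : 'M[C]_m) :
  adj Pi = Pi -> Pi *m Pi = Pi -> specnorm_le1 Pi.
Proof.
move=> Pi_herm Pi_idem x.
have orth : (adj (x - Pi *m x) *m (Pi *m x)) 0 0 = 0.
  rewrite mulmxA -[X in _ *m X *m _]Pi_herm -adjmxM mulmxBr mulmxA Pi_idem subrr.
  by rewrite /adj map_mx0 trmx0 mul0mx mxE.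
by rewrite -{2}[x](subrK (Pi *m x)) addrC vnorm2D_orth // lerDl vnorm2_ge0.
Qed.

Lemma quadratic_form_le m (A : 'M[C]_m) (v : 'cV[C]_m) :
  specnorm_le1 A -> `|(adj v *m (A *m v)) 0 0| <= vnorm2 v.
Proof.
move=> A_le1; rewrite -(@ler_pXn2r _ 2) ?nnegrE ?vnorm2_ge0 //.
by rewrite (le_trans (cauchy_schwarz_cV _ v (A *m v))) // expr2 ler_wpM2l ?vnorm2_ge0.
Qed.

End Contraction.

Section TensorBlocks.
Context {C : numClosedFieldType} {m p : nat}.

Lemma sum_mxtens_index (F : 'I_(m * p) -> C) :
  \sum_k F k = \sum_i \sum_j F (mxtens_index (i, j)).
Proof.
rewrite pair_big (reindex (@mxtens_index m p)) /=; first by apply: eq_bigr => -[].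
by exists (@mxtens_unindex m p) => k _; rewrite (mxtens_indexK, mxtens_unindexK).
Qed.

Definition tensblock (i : 'I_m) (x : 'cV[C]_(m * p)) : 'cV[C]_p :=
  \col_j x (mxtens_index (i, j)) 0.

Lemma eq_tensblock (x y : 'cV[C]_(m * p)) :
  (forall i, tensblock i x = tensblock i y) -> x = y.
Proof.
move=> same; apply/colP => k; case: (mxtens_indexP k) => i j.
by have /colP/(_ j) := same i; rewrite !mxE.
Qed.

Lemma adj_mulmx_tensblock (x y : 'cV[C]_(m * p)) :
  (adj x *m y) 0 0 = \sum_i (adj (tensblock i x) *m tensblock i y) 0 0.
Proof.
rewrite mxE sum_mxtens_index; apply: eq_bigr => i _.
by rewrite mxE; apply: eq_bigr => j _; rewrite !mxE.
Qed.

Lemma tensblock_tens1mx_mul (M : 'M[C]_p) (x : 'cV[C]_(m * p)) i :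
  tensblock i ((1%:M *t M) *m x) = M *m tensblock i x.
Proof.
apply/colP => j; rewrite !mxE sum_mxtens_index (bigD1 i) //=.
rewrite [X in _ + X]big1 => [|i' i'_neq_i].
  by rewrite addr0; apply: eq_bigr => j' _; rewrite tensmxE !mxE eqxx mul1r.
by apply: big1 => j' _; rewrite tensmxE mxE eq_sym (negbTE i'_neq_i) !mul0r.
Qed.

Lemma specnorm_le1_tens1mx (M : 'M[C]_p) :
  specnorm_le1 M -> specnorm_le1 (1%:M *t M : 'M[C]_(m * p)).
Proof.
move=> M_le1 x; rewrite /vnorm2 !adj_mulmx_tensblock; apply: ler_sum => i _.
by rewrite tensblock_tens1mx_mul; apply: M_le1.
Qed.

End TensorBlocks.

Section Projection.
Context {C : numClosedFieldType} {m : nat}.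

Lemma idempotent_mulmx_id (Pi : 'M[C]_m) (x : 'cV[C]_m) :
  Pi *m Pi = Pi -> (x^T <= Pi^T)%MS -> Pi *m x = x.
Proof.
move=> Pi_idem /submxP[D x_def].
by rewrite -[x]trmxK x_def trmx_mul trmxK mulmxA Pi_idem.
Qed.

Lemma hermitian_mulmx_eq0 (B : 'M[C]_m) (x : 'cV[C]_m) :
  adj B = B -> (B^T <= kermx (map_mx Num.conj x))%MS -> B *m x = 0.
Proof.
move=> B_herm /sub_kermxP Bx_orth.
by rewrite -B_herm /adj map_trmx -[x]map_mxCK -map_mxM Bx_orth map_mx0.
Qed.

End Projection.

Section Pauli.
Context {C : numClosedFieldType}.

Lemma pauli1_conj (a : 'I_4) b c : (pauli1 C a b c)^* = pauli1 C a c b.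
Proof.
by case: a => [[|[|[|[|a]]]] Ha] //=; case: b; case: c;
  rewrite /pauli1 /= ?conjC0 ?conjC1 ?conjCN1 ?(raddfN Num.conj) /= ?conjCi ?opprK.
Qed.

Lemma pauli1_ortho (a a' : 'I_4) : a != a' ->
  \sum_(b : bool) \sum_(c : bool) (pauli1 C a b c)^* * pauli1 C a' b c = 0.
Proof.
rewrite !big_bool /=.
by case: a => [[|[|[|[|a]]]] Ha] //=; case: a' => [[|[|[|[|a']]]] Ha'] //= _;
  rewrite /pauli1 /= ?conjC0 ?conjC1 ?conjCN1 ?(raddfN Num.conj) /= ?conjCi ?opprK; ring.
Qed.

Lemma adj_pauli n (P : pstring n) : adj (pauli C P) = pauli C P.
Proof.
apply/matrixP => x y; rewrite adjE !mxE rmorph_prod /=.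
by apply: eq_bigr => q _; rewrite pauli1_conj.
Qed.

Lemma pauli_pid n : pauli C (pid n) = 1%:M.
Proof.
apply/matrixP => x y; rewrite !mxE.
under eq_bigr => q _ do rewrite /pid ffunE /pauli1 /=.
have [->|x_neq_y] := eqVneq x y; first by rewrite big1 // => q _; rewrite eqxx.
have [q bit_neq] : exists q : 'I_n, bit x q != bit y q.
  apply/existsP; apply: contraNT x_neq_y; rewrite negb_exists => /forallP same.
  apply/eqP/val_inj/(@eq_from_bits n); rewrite ?ltn_ord // => q q_lt.
  by apply/eqP; rewrite -[_ == _]negbK (same (Ordinal q_lt)).
by rewrite (bigD1 q) //= (negbTE bit_neq) mul0r.
Qed.

Lemma weight_pid n : weight (pid n) = 0%N.
Proof.
by apply/eqP; rewrite cards_eq0; apply/eqP/setP => q; rewrite !inE ffunE eqxx.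
Qed.

Lemma trace_adj_pauli_mul n (P Q : pstring n) : P != Q ->
  \tr (adj (pauli C P) *m pauli C Q) = 0.
Proof.
move=> P_neq_Q.
have [q0 P_neq_Q_at] : exists q0, P q0 != Q q0.
  apply/existsP; apply: contraNT P_neq_Q; rewrite negb_exists => /forallP same.
  by apply/eqP/ffunP => q; apply/eqP; rewrite -[_ == _]negbK same.
pose G q b c := (pauli1 C (P q) b c)^* * pauli1 C (Q q) b c.
transitivity (\sum_(y < 2 ^ n) \sum_(x < 2 ^ n) \prod_(q < n) G q (bit x q) (bit y q)).
  apply: eq_bigr => y _; rewrite !mxE; apply: eq_bigr => x _.
  by rewrite adjE !mxE rmorph_prod -big_split.
under eq_bigr => y _ do rewrite (@sum_prod_bits _ n (fun q b => G q b (bit y q))).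
rewrite (@sum_prod_bits _ n (fun q c => G q false c + G q true c)) (bigD1 q0) //=.
have G_q0_sum :
    G q0 false false + G q0 true false + (G q0 false true + G q0 true true) = 0.
  by rewrite -(@pauli1_ortho _ _ P_neq_Q_at) !big_bool /G /=; ring.
by rewrite G_q0_sum mul0r.
Qed.

Lemma mxtrace_pauli n (P : pstring n) : P != pid n -> \tr (pauli C P) = 0.
Proof.
move=> P_neq_pid.
by rewrite -[pauli C P]mul1mx -adjmx1 -(pauli_pid n) trace_adj_pauli_mul // eq_sym.
Qed.

Lemma pauli_coef_pid_eq0 n (alpha : pstring n -> C) :
  \tr (\sum_P alpha P *: pauli C P) = 0 -> alpha (pid n) = 0.
Proof.
rewrite raddf_sum (bigD1 (pid n)) //= big1 => [|P P_neq_pid]; last first.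
  by rewrite mxtraceZ mxtrace_pauli ?mulr0.
rewrite addr0 mxtraceZ pauli_pid mxtrace1 => /eqP.
by rewrite mulf_eq0 pnatr_eq0 expn_eq0 orbF => /eqP.
Qed.

Lemma adj_real_pauli_sum n (alpha : pstring n -> C) :
  (forall P, alpha P \is Num.real) ->
  adj (\sum_P alpha P *: pauli C P) = \sum_P alpha P *: pauli C P.
Proof.
move=> alpha_real; rewrite /adj map_mx_sum linear_sum; apply: eq_bigr => P _.
by rewrite map_mxZ linearZ /= conj_Creal // -[X in _ *: X]/(adj _) adj_pauli.
Qed.

End Pauli.

Section PauliVectors.
Context {C : numClosedFieldType} (n : nat).
Local Notation N := (2 ^ n)%N.

(* [sigmaP C P] is convertible to [sigmaM n (pauli C P)]. *)
Definition sigmaM (M : 'M[C]_N) : 'cV[C]_(N * N) := (1%:M *t M) *m sigmaI C n.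

Lemma tensblock_sigmaI i :
  tensblock i (sigmaI C n) = (sqrtC N%:R)^-1 *: delta_mx i 0.
Proof.
apply/colP => j; rewrite /sigmaI !mxE summxE; congr (_ * _).
(* the column index of [delta_mx x 0 *t delta_mx x 0] ranges over 'I_(1 * 1) *)
under eq_bigr => x _ do rewrite !mxE mxtens_indexK /= !(ord1 (Ordinal _)) !andbT.
rewrite andbT (bigD1 i) //= eqxx mul1r big1 ?addr0 // => x x_neq_i.
by rewrite eq_sym (negbTE x_neq_i) mul0r.
Qed.

Lemma tensblock_sigmaM (M : 'M[C]_N) i :
  tensblock i (sigmaM M) = (sqrtC N%:R)^-1 *: col i M.
Proof. by rewrite tensblock_tens1mx_mul tensblock_sigmaI -scalemxAr colE. Qed.

Lemma sigmaM1 : sigmaM 1%:M = sigmaI C n.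
Proof. by apply: eq_tensblock => i; rewrite tensblock_sigmaM tensblock_sigmaI col1. Qed.

Lemma sigmaM_entry (M : 'M[C]_N) i j :
  sigmaM M (mxtens_index (i, j)) 0 = (sqrtC N%:R)^-1 * M j i.
Proof. by have /colP/(_ j) := tensblock_sigmaM M i; rewrite !mxE. Qed.

Lemma sigmaM_sum (I : finType) (r : pred I) (a : I -> C) (M : I -> 'M[C]_N) :
  sigmaM (\sum_(i | r i) a i *: M i) = \sum_(i | r i) a i *: sigmaM (M i).
Proof.
apply/colP => k; case: (mxtens_indexP k) => i j.
rewrite sigmaM_entry !summxE mulr_sumr; apply: eq_bigr => l _.
by rewrite [RHS]mxE sigmaM_entry mulrCA mxE.
Qed.

Lemma adj_sigmaM_mul (M M' : 'M[C]_N) :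
  (adj (sigmaM M) *m sigmaM M') 0 0 = \tr (adj M *m M') / N%:R.
Proof.
have c2 : ((sqrtC N%:R)^-1)^* * (sqrtC N%:R)^-1 = N%:R^-1 :> C.
  by rewrite geC0_conj ?invr_ge0 ?sqrtC_ge0 ?ler0n // -expr2 exprVn sqrtCK.
rewrite adj_mulmx_tensblock /mxtrace mulr_suml; apply: eq_bigr => i _.
rewrite !tensblock_sigmaM adjmxZ -scalemxAl -scalemxAr !mxE mulrA c2 mulrC.
by congr (_ * _); apply: eq_bigr => j _; rewrite !mxE.
Qed.

Lemma vnorm2_sigmaM (M : 'M[C]_N) : vnorm2 (sigmaM M) = norm2 M ^+ 2.
Proof. by rewrite /norm2 sqrtCK; apply: adj_sigmaM_mul. Qed.

Lemma adj_sigmaP_mul (P Q : pstring n) : P != Q ->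
  (adj (sigmaP C P) *m sigmaP C Q) 0 0 = 0.
Proof. by move=> P_neq_Q; rewrite adj_sigmaM_mul trace_adj_pauli_mul ?mul0r. Qed.

End PauliVectors.

Section ProjectorD.
Context {C : numClosedFieldType} {n k : nat} {Pi : 'M[C]_(2 ^ n * 2 ^ n)}.
Hypothesis Pi_proj : is_proj_D k Pi.

Lemma proj_D_sigmaP_in (P : pstring n) : inD k P -> Pi *m sigmaP C P = sigmaP C P.
Proof.
case: Pi_proj => _ Pi_idem /andP[_ D_le_Pi] P_in_D.
apply: idempotent_mulmx_id Pi_idem (submx_trans _ D_le_Pi).
by rewrite (sumsmx_sup P) ?genmxE.
Qed.

Lemma proj_D_sigmaP_out (P : pstring n) : ~~ inD k P -> Pi *m sigmaP C P = 0.
Proof.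
case: Pi_proj => Pi_herm _ /andP[Pi_le_D _] P_notin_D.
apply: hermitian_mulmx_eq0 Pi_herm (submx_trans Pi_le_D _).
apply/sumsmx_subP => Q Q_in_D; rewrite genmxE sub_kermx -[X in X == 0]trmxK.
rewrite trmx_mul trmxK -/(adj _); apply/eqP/matrixP => i j.
rewrite !ord1 [LHS]mxE adj_sigmaP_mul ?mxE //.
by apply: contraNneq P_notin_D => ->.
Qed.

Lemma proj_D_sigmaI : Pi *m sigmaI C n = sigmaI C n.
Proof. by rewrite -sigmaM1 -(pauli_pid n) proj_D_sigmaP_in // /inD eqxx. Qed.

Lemma proj_D_sigmaM_pauli_sum (alpha : pstring n -> C) : alpha (pid n) = 0 ->
  Pi *m sigmaM n (\sum_P alpha P *: pauli C P) = sigmaM n (Hgt k alpha).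
Proof.
move=> alpha_pid; rewrite !sigmaM_sum mulmx_sumr [RHS]big_mkcond /=.
apply: eq_bigr => P _; rewrite -scalemxAr.
have [->|P_neq_pid] := eqVneq P (pid n); first by rewrite alpha_pid !scale0r weight_pid.
have inD_P : inD k P = (k < weight P)%N by rewrite /inD (negbTE P_neq_pid).
case: ifP => weight_P; first by rewrite proj_D_sigmaP_in // inD_P.
by rewrite proj_D_sigmaP_out ?scaler0 // inD_P weight_P.
Qed.

End ProjectorD.

Lemma expI_mxpowSS {C : numClosedFieldType} n (A : 'M[C]_(2 ^ n * 2 ^ n)) l :
  adj A = A ->
  expI (mxpow A l.+2) =
    (adj (A *m sigmaI C n) *m (mxpow A l *m (A *m sigmaI C n))) 0 0.
Proof.
move=> A_herm; rewrite /expI -[mxpow A l.+2]/(A *m mxpow A l.+1) mxpowSr.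
by rewrite adjmxM A_herm !mulmxA.
Qed.

Theorem lemma4p10 (C : numClosedFieldType) (n k : nat)
    (alpha : pstring n -> C) (H : 'M[C]_(2 ^ n)) (Pi : 'M[C]_(2 ^ n * 2 ^ n)) :
  (forall P, alpha P \is Num.real) ->
  H = \sum_(P : pstring n) alpha P *: pauli C P ->
  specnorm_le1 H ->
  \tr H = 0 ->
  is_proj_D k Pi ->
  let A := Pi *m ((1%:M : 'M[C]_(2 ^ n)) *t H) *m Pi in
  forall l : nat, (2 <= l)%N ->
    `|expI (mxpow A l)| <= expI (mxpow A 2) /\
    expI (mxpow A 2) = norm2 (Hgt k alpha) ^+ 2.
Proof.
move=> alpha_real H_def H_le1 trH0 Pi_proj A l l_ge2.
have [Pi_herm Pi_idem _] := Pi_proj.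
have A_herm : adj A = A.
  by rewrite /A !adjmxM adj_tens adjmx1 H_def adj_real_pauli_sum // Pi_herm mulmxA.
have A_le1 : specnorm_le1 A.
  apply: specnorm_le1_mul; last exact: specnorm_le1_proj.
  by apply: specnorm_le1_mul; [exact: specnorm_le1_proj | exact: specnorm_le1_tens1mx].
have A_sigmaI : A *m sigmaI C n = sigmaM n (Hgt k alpha).
  rewrite /A -mulmxA (proj_D_sigmaI Pi_proj) -mulmxA -/(sigmaM n H) H_def.
  by rewrite (proj_D_sigmaM_pauli_sum Pi_proj) // pauli_coef_pid_eq0 // -H_def.
have expI_A2 : expI (mxpow A 2) = vnorm2 (sigmaM n (Hgt k alpha)).
  by rewrite expI_mxpowSS // mul1mx A_sigmaI.
split; last by rewrite expI_A2 vnorm2_sigmaM.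
case: l l_ge2 => [|[|l]] // _.
rewrite expI_mxpowSS // A_sigmaI expI_A2.
exact/quadratic_form_le/specnorm_le1_mxpow.
Qed.
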